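(* Let $D$ be an instance all of whose tuples are endogenous, let $\mathcal{Q}$ be a monotone query, and let $\bar a\in\mathcal{Q}(D)$. Then for $D'\subseteq D$, we have $(D,D',\bar a)\in\mathcal{MSSEP}^{c}(\mathcal{Q})$ if and only if there is $t\in D\smallsetminus D'$ such that $t\in\mathcal{MRC}(D,\mathcal{Q}(\bar a))$, $\Lambda:=D\smallsetminus(D'\cup\{t\})\in\mathit{Cont}(D,\mathcal{Q}(\bar a),t)$, and there is no $\Lambda'\in\mathit{Cont}(D,\mathcal{Q}(\bar a),t)$ with $|\Lambda'|<|\Lambda|$.
   Context: A query $\mathcal{Q}$ is monotone if $D_1\subseteq D_2$ implies $\mathcal{Q}(D_1)\subseteq\mathcal{Q}(D_2)$; $D\models\mathcal{Q}(\bar a)$ means $\bar a\in\mathcal{Q}(D)$. Here $D^n=D$. A tuple $\tau\in D^n$ is an actual cause for $\bar a$ if there is $\Gamma\subseteq D^n$ (contingency set) with $D\smallsetminus\Gamma\models\mathcal{Q}(\bar a)$ and $D\smallsetminus(\Gamma\cup\{\tau\})\not\models\mathcal{Q}(\bar a)$. $\mathit{Cont}(D,\mathcal{Q}(\bar a),\tau)$ is the set of subset-minimal such contingency sets $\Lambda\subseteq D^n$ (i.e. $D\smallsetminus\Lambda\models\mathcal{Q}(\bar a)$, $D\smallsetminus(\Lambda\cup\{\tau\})\not\models\mathcal{Q}(\bar a)$, and $D\smallsetminus(\Lambda'\cup\{\tau\})\models\mathcal{Q}(\bar a)$ for all $\Lambda'\subsetneq\Lambda$). The responsibility of an actual cause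 $\tau$ is $1/(|\Gamma|+1)$ with $\Gamma$ a minimum-size contingency set for $\tau$ (and $0$ for non-causes); $\mathcal{MRC}(D,\mathcal{Q}(\bar a))$ is the set of actual causes for $\bar a$ with maximum responsibility. $\mathcal{MSSEP}^{c}(\mathcal{Q})$ is the set of triples $(D,D',\bar a)$ with $\bar a\in\mathcal{Q}(D)$, $D'\subseteq D$, $\bar a\notin\mathcal{Q}(D')$, and $D'$ of maximum cardinality among subsets of $D$ with this last property (minimum source-side-effect). *)

From mathcomp Require Import all_boot all_order all_algebra.
Set Implicit Arguments. Unset Strict Implicit. Unset Printing Implicit Defensive.
Import Order.TTheory GRing.Theory Num.Theory.

(* Tuples range over a finite type T (the finitely many candidate tuples);
   an instance is a finite set D : {set T}.  A query Q maps an instance to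
   its set of answers (answers of type A), given as a boolean predicate:
   Q D a  means  D |= Q(a).  All tuples are endogenous, so D^n = D. *)

Section Causality.
Variables (T : finType) (A : Type).

Definition monotone_query (Q : {set T} -> pred A) : Prop :=
  forall D1 D2 : {set T}, D1 \subset D2 -> forall a, Q D1 a -> Q D2 a.

Variables (Q : {set T} -> pred A) (D : {set T}) (a : A).

Definition is_contingency (tau : T) (G : {set T}) : bool :=
  [&& G \subset D, Q (D :\: G) a & ~~ Q (D :\: (G :|: [set tau])) a].

Definition actual_cause (tau : T) : bool :=
  (tau \in D) && [exists G : {set T}, is_contingency tau G].

Definition Cont (tau : T) : {set {set T}} :=
  [set L : {set T} | is_contingency tau L &&
     [forall L' : {set T}, (L' \proper L) ==> Q (D :\: (L' :|: [set tau])) a]].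

(* size of a minimum-size contingency set (every contingency set is a
   subset of T, so #|T| is a correct neutral upper bound) *)
Definition min_cont_size (tau : T) : nat :=
  \big[minn/#|T|]_(G : {set T} | is_contingency tau G) #|G|.

Definition responsibility (tau : T) : rat :=
  (if actual_cause tau then ((min_cont_size tau).+1%:R)^-1 else 0)%R.

Definition MRC : {set T} :=
  [set tau | actual_cause tau &&
     [forall tau' : T, (responsibility tau' <= responsibility tau)%R]].

End Causality.

Definition MSSEPc (T : finType) (A : Type) (Q : {set T} -> pred A)
  (D D' : {set T}) (a : A) : Prop :=
  [/\ Q D a, D' \subset D, ~~ Q D' a &
      forall D'' : {set T}, D'' \subset D -> ~~ Q D'' a -> #|D''| <= #|D'|].

From mathcomp Require Import all_boot all_algebra.
From mathcomp Require Import zify.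
Set Implicit Arguments. Unset Strict Implicit. Unset Printing Implicit Defensive.
Import GRing.Theory Num.Theory.

(* Call S a minimum removal set if deleting S from D falsifies Q(a) and no
   smaller set does; (D, D', a) is in MSSEP^c exactly when D \ D' is one.
   If t lies in a minimum removal set S, then S \ {t} is a contingency set
   for t, while any contingency set G of any cause t' yields the removal set
   G + {t'}, so |S| <= |G| + 1; hence t attains the least possible minimum
   contingency size |S| - 1, i.e. maximum responsibility.  Conversely, a cause
   t of maximum responsibility has a minimum contingency set of size |S| - 1,
   which is subset-minimal because it is smaller than S; so the minimality of
   Lambda = (D \ D') \ {t} among those forces |D \ D'| <= |S|. *)

Section MinimumRemoval.
Variables (T : finType) (A : Type) (Q : {set T} -> pred A) (D : {set T}) (a : A).

Definition minimum_removal (S : {set T}) : Prop :=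
  [/\ S \subset D, ~~ Q (D :\: S) a &
      forall S', ~~ Q (D :\: S') a -> #|S| <= #|S'|].

Lemma min_cont_size_le t G :
  is_contingency Q D a t G -> min_cont_size Q D a t <= #|G|.
Proof.
move=> HG; rewrite /min_cont_size.
elim: (index_enum _) (mem_index_enum G) => [//|i s IH]; rewrite inE big_cons.
case/predU1P => [<-|Hs]; first by rewrite HG geq_minl.
case: ifP => _; last exact: IH.
by rewrite geq_min IH ?orbT.
Qed.

Lemma min_cont_size_attained t G : is_contingency Q D a t G ->
  exists2 G', is_contingency Q D a t G' & #|G'| = min_cont_size Q D a t.
Proof.
move=> HG.
have : min_cont_size Q D a t = #|T| \/
    exists2 G', is_contingency Q D a t G' & #|G'| = min_cont_size Q D a t.
  rewrite /min_cont_size; apply: (big_ind (fun x => x = #|T| \/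
    exists2 G', is_contingency Q D a t G' & #|G'| = x)) => //; first by left.
  - by move=> x y Hx Hy; rewrite /minn; case: ifP.
  - by move=> i Hi; right; exists i.
case=> // E; exists G => //.
by apply/eqP; rewrite eqn_leq min_cont_size_le // E max_card.
Qed.

Lemma actual_cause_min_cont_size t : actual_cause Q D a t ->
  exists2 G, is_contingency Q D a t G & #|G| = min_cont_size Q D a t.
Proof. by case/andP=> _ /existsP[G /min_cont_size_attained]. Qed.

Lemma responsibility_le t t' :
  actual_cause Q D a t -> actual_cause Q D a t' ->
  (responsibility Q D a t' <= responsibility Q D a t)%R =
  (min_cont_size Q D a t <= min_cont_size Q D a t').
Proof.
by move=> Ht Ht'; rewrite /responsibility Ht Ht' lef_pV2 ?posrE ?ltr0Sn // ler_nat.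
Qed.

Lemma MRC_actual_cause t : t \in MRC Q D a -> actual_cause Q D a t.
Proof. by rewrite inE => /andP[]. Qed.

Lemma exists_minimum_removal X : ~~ Q (D :\: X) a -> exists S, minimum_removal S.
Proof.
move=> HX; case: (@arg_minnP _ X (fun S => ~~ Q (D :\: S) a) (fun S => #|S|) HX).
move=> M HM Mmin.
have EM : D :\: (M :&: D) = D :\: M by rewrite setDIr setDv setU0.
exists (M :&: D); split; rewrite ?subsetIr ?EM //.
by move=> S' HS'; apply: leq_trans (Mmin _ HS'); rewrite subset_leq_card ?subsetIl.
Qed.

Lemma minimum_removal_neq0 S : Q D a -> minimum_removal S -> S != set0.
Proof. by move=> QD [_ + _]; apply: contraNneq => ->; rewrite setD0. Qed.

Lemma removal_of_contingency t G :
  is_contingency Q D a t G -> ~~ Q (D :\: (t |: G)) a.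
Proof. by case/and3P=> _ _; rewrite setUC. Qed.

Section Minimum.
Variable S : {set T}.
Hypothesis minS : minimum_removal S.

Lemma minimum_removal_card_le t G :
  is_contingency Q D a t G -> #|S| <= #|G|.+1.
Proof.
case: minS => _ _ Smin /removal_of_contingency /Smin.
by move/leq_trans; apply; rewrite cardsU1 -add1n leq_add2r leq_b1.
Qed.

Lemma contingency_small_Cont t G :
  is_contingency Q D a t G -> #|G| < #|S| -> G \in Cont Q D a t.
Proof.
move=> HG ltGS; rewrite inE HG; apply/forallP=> L'; apply/implyP=> ltL'.
apply: contraT; case: minS => _ _ Smin; rewrite setUC => /Smin.
have := proper_card ltL'; rewrite cardsU1; lia.
Qed.

Lemma minimum_removal_contingency t :
  t \in S -> is_contingency Q D a t (S :\ t).
Proof.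
move=> tS; case: minS => subSD notQ Smin; apply/and3P; split.
- exact: subset_trans (subD1set _ _) subSD.
- apply: contraT => /Smin; rewrite (cardsD1 t S) tS; lia.
- by rewrite setUC setD1K.
Qed.

Lemma minimum_removal_Cont t : t \in S -> S :\ t \in Cont Q D a t.
Proof.
move=> tS; apply: contingency_small_Cont (minimum_removal_contingency tS) _.
by rewrite (cardsD1 t S) tS.
Qed.

Lemma min_cont_size_minimum_removal t :
  t \in S -> (min_cont_size Q D a t).+1 = #|S|.
Proof.
move=> tS; have HSt := minimum_removal_contingency tS.
have [G HG EG] := min_cont_size_attained HSt.
apply/eqP; rewrite eqn_leq -{2}EG (minimum_removal_card_le HG) andbT.
by rewrite (cardsD1 t S) tS ltnS min_cont_size_le.
Qed.

Lemma minimum_removal_actual_cause t : t \in S -> actual_cause Q D a t.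
Proof.
move=> tS; rewrite /actual_cause (subsetP _ _ tS); last by case: minS.
by apply/existsP; exists (S :\ t); apply: minimum_removal_contingency.
Qed.

Lemma minimum_removal_MRC t : t \in S -> t \in MRC Q D a.
Proof.
move=> tS; have Ct := minimum_removal_actual_cause tS.
rewrite inE Ct; apply/forallP=> t'.
case Ct': (actual_cause Q D a t'); last first.
  by rewrite /responsibility Ct' Ct invr_ge0 ler0n.
rewrite responsibility_le // -ltnS min_cont_size_minimum_removal //.
have [G HG <-] := actual_cause_min_cont_size Ct'.
exact: minimum_removal_card_le HG.
Qed.

Lemma MRC_min_cont_size t :
  Q D a -> t \in MRC Q D a -> (min_cont_size Q D a t).+1 = #|S|.
Proof.
move=> QD; rewrite inE => /andP[Ct /forallP maxt].
have /set0Pn[u uS] := minimum_removal_neq0 QD minS.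
have Cu := minimum_removal_actual_cause uS.
have := maxt u; rewrite responsibility_le // -ltnS (min_cont_size_minimum_removal uS).
have [G HG <-] := actual_cause_min_cont_size Ct.
by move=> leGS; apply/eqP; rewrite eqn_leq leGS (minimum_removal_card_le HG).
Qed.

End Minimum.

Lemma MSSEPc_minimum_removal (D' : {set T}) :
  Q D a -> D' \subset D -> MSSEPc Q D D' a <-> minimum_removal (D :\: D').
Proof.
move=> QD subD'.
have DDK (X : {set T}) : X \subset D -> D :\: (D :\: X) = X.
  by move=> subX; rewrite setDDr setDv set0U; apply/setIidPr.
have cardDD (X : {set T}) : X \subset D -> #|D :\: X| = #|D| - #|X|.
  by move=> subX; rewrite cardsD (setIidPr subX).
have := subset_leq_card subD'; rewrite /MSSEPc => leD'.
split=> [[_ _ notQ maxD'] | [_ notQ minD']].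
- split; rewrite ?subsetDl ?DDK // => S' /(maxD' _ (subsetDl D S')).
  rewrite (cardDD _ subD') cardsD; have := subset_leq_card (subsetIl D S').
  have := subset_leq_card (subsetIr D S'); lia.
- split=> //; first by rewrite -(DDK _ subD').
  move=> D'' subD'' notQ''; have := minD' (D :\: D''); rewrite DDK // => /(_ notQ'').
  rewrite !cardDD ?subsetDl //; have := subset_leq_card subD''; lia.
Qed.

End MinimumRemoval.

Theorem proposition8 (T : finType) (A : Type) (Q : {set T} -> pred A)
  (D : {set T}) (a : A) :
  monotone_query Q -> Q D a ->
  forall D' : {set T}, D' \subset D ->
  (MSSEPc Q D D' a <->
   exists t : T,
     [/\ t \in D :\: D',
         t \in MRC Q D a,
         D :\: (D' :|: [set t]) \in Cont Q D a t &
         ~ (exists L' : {set T},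
              L' \in Cont Q D a t /\ #|L'| < #|D :\: (D' :|: [set t])|)]).
Proof.
move=> _ QD D' subD'; rewrite MSSEPc_minimum_removal //.
set S := D :\: D'; have ES t : D :\: (D' :|: [set t]) = S :\ t by rewrite setDDl.
split=> [minS | [t []]].
- have /set0Pn[t tS] := minimum_removal_neq0 QD minS.
  exists t; rewrite ES; split=> //.
  + exact (minimum_removal_MRC minS tS).
  + exact (minimum_removal_Cont minS tS).
  case=> L' []; rewrite inE => /andP[/(minimum_removal_card_le minS) + _].
  by rewrite (cardsD1 t S) tS; lia.
- rewrite ES => tS MRCt /setIdP[contSt _] noSmaller.
  have notQS : ~~ Q (D :\: S) a.
    by have := removal_of_contingency contSt; rewrite setD1K.
  have [S0 minS0] := exists_minimum_removal notQS.
  have [G contG EG] := actual_cause_min_cont_size (MRC_actual_cause MRCt).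
  have ltGS0 : #|G| < #|S0| by rewrite EG -(MRC_min_cont_size minS0 QD MRCt).
  have leStG : #|S :\ t| <= #|G|.
    by rewrite leqNgt; apply/negP=> ltGSt; apply: noSmaller; exists G;
      rewrite (contingency_small_Cont minS0 contG ltGS0).
  case: minS0 => _ _ minS0; split; rewrite ?subsetDl // => S' /minS0.
  by rewrite (cardsD1 t S) tS in leStG *; lia.
Qed.
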